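(* The algebra $\mathcal{A}_{+++}$ is the unital algebra generated by $\tilde k,\tilde l,\tilde p,\tilde q,r,\tilde m,\tilde n,\tilde s,\tilde t$ subject exactly to the $40$ relations $xy=yx=0$ for all $x\in X_1=\{\tilde k,\tilde l,\tilde p,\tilde q,r\}$ and $y\in X_2=\{\tilde m,\tilde n,\tilde s,\tilde t\}$. Consequently, there are no relations among the generators in $X_1$ nor among those in $X_2$, and $\mathcal{A}_{+++}$ is isomorphic to the fibre product $\{(f,g)\in \mathbb{C}\langle X_1\rangle\times\mathbb{C}\langle X_2\rangle : f(0)=g(0)\}$, where $\mathbb{C}\langle X_i\rangle$ is the free unital algebra on $X_i$ and $f(0)$ denotes the constant term.
   Context: Work over $\mathbb{C}$. For $\epsilon_a,\epsilon_b,\epsilon_c\in\{\pm1\}$ let $a_+=b_+=c_+=\tfrac12$, $a_-=\tfrac{\epsilon_a}{2}$, $b_-=\tfrac{\epsilon_b}{2}$, $c_-=\tfrac{\epsilon_c}{2}$. In the ordered basis $e_1\otimes e_1,e_1\otimes e_2,e_1\otimes e_3,e_2\otimes e_1,\dots,e_3\otimes e_3$ of $\mathbb{C}^3\otimes\mathbb{C}^3$ let $$\widehat R=\begin{pmatrix} a_+&0&0&0&0&0&0&0&a_-\\ 0&b_+&0&0&0&0&0&b_-&0\\ 0&0&a_+&0&0&0&a_-&0&0\\ 0&0&0&c_+&0&c_-&0&0&0\\ 0&0&0&0&1&0&0&0&0\\ 0&0&0&c_-&0&c_+&0&0&0\\ 0&0&a_-&0&0&0&a_+&0&0\\ 0&b_-&0&0&0&0&0&b_+&0\\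 a_-&0&0&0&0&0&0&0&a_+\end{pmatrix},$$ and $R=P\widehat R$ with $P$ the flip $e_i\otimes e_j\mapsto e_j\otimes e_i$. Let $T=\begin{pmatrix}k&p&l\\ q&r&s\\ m&t&n\end{pmatrix}$, $T_1=T\otimes I_3$, $T_2=I_3\otimes T$, and let $\mathcal{A}_{\epsilon_a\epsilon_b\epsilon_c}$ be the unital associative algebra generated by $k,l,m,n,p,q,r,s,t$ subject to $R\,T_1T_2=T_2T_1R$. $\mathcal{A}_{+++}$ denotes the case $\epsilon_a=\epsilon_b=\epsilon_c=+1$. New generators: $\tilde k=\tfrac12(k+n)$, $\tilde n=\tfrac12(k-n)$, $\tilde l=\tfrac12(l+m)$, $\tilde m=\tfrac12(l-m)$, $\tilde p=\tfrac12(p+t)$, $\tilde t=\tfrac12(p-t)$, $\tilde q=\tfrac12(q+s)$, $\tilde s=\tfrac12(q-s)$. *)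

From HB Require Import structures.
From mathcomp Require Import all_boot all_order all_algebra.
Set Implicit Arguments. Unset Strict Implicit. Unset Printing Implicit Defensive.
Import Order.TTheory GRing.Theory Num.Theory.
Local Open Scope ring_scope.

Section Defs.
Variable F : numClosedFieldType.

Definition alg_hom (A B : algType F) (f : A -> B) : Prop :=
  [/\ forall x y, f (x + y) = f x + f y,
      forall x y, f (x * y) = f x * f y,
      f 1 = 1 &
      forall (c : F) x, f (c *: x) = c *: f x].

Inductive generated (A : algType F) (n : nat) (g : 'I_n -> A) : A -> Prop :=
  | gen_gen i : generated g (g i)
  | gen_scal (c : F) : generated g (c%:A)
  | gen_add x y : generated g x -> generated g y -> generated g (x + y)
  | gen_mul x y : generated g x -> generated g y -> generated g (x * y).

(* (A, g) is the unital F-algebra generated by g subject exactly to rel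
   (universal property of the presented algebra). *)
Definition presents (n : nat) (rel : forall B : algType F, ('I_n -> B) -> Prop)
  (A : algType F) (g : 'I_n -> A) : Prop :=
  [/\ rel A g,
      forall x, generated g x &
      forall (B : algType F) (h : 'I_n -> B), rel B h ->
        exists f : A -> B, alg_hom f /\ forall i, f (g i) = h i].

Definition free_on (n : nat) (A : algType F) (g : 'I_n -> A) : Prop :=
  presents (fun B _ => True) g.

(* basis index of e_a (x) e_b is 3a+b; a = i %/ 3, b = i %% 3 *)
Definition Rhat (ea eb ec : F) : 'M[F]_9 :=
  \matrix_(i < 9, j < 9)
    if i == j then (if (i == 4%N :> nat) then 1 else 2^-1)
    else if ((i + j)%N == 8%N) then
      (if (i == 0%N :> nat) || (i == 2%N :> nat) || (i == 6%N :> nat) || (i == 8%N :> nat) then ea / 2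
       else if (i == 1%N :> nat) || (i == 7%N :> nat) then eb / 2
       else ec / 2)
    else 0.

(* flip e_a (x) e_b |-> e_b (x) e_a *)
Definition Pflip : 'M[F]_9 :=
  \matrix_(i < 9, j < 9) if (j == 3 * (i %% 3) + i %/ 3 :> nat)%N then 1 else 0.

Definition Rmat (ea eb ec : F) : 'M[F]_9 := Pflip *m Rhat ea eb ec.

(* T = [[k,p,l],[q,r,s],[m,t,n]] from a family indexed row-major *)
Definition Tmat (B : algType F) (g : 'I_9 -> B) : 'M[B]_3 :=
  \matrix_(a < 3, c < 3) g (inord (3 * a + c)).

Definition T1 (B : algType F) (T : 'M[B]_3) : 'M[B]_9 :=
  \matrix_(i < 9, j < 9)
    if (i %% 3 == j %% 3)%N then T (inord (i %/ 3)) (inord (j %/ 3)) else 0.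

Definition T2 (B : algType F) (T : 'M[B]_3) : 'M[B]_9 :=
  \matrix_(i < 9, j < 9)
    if (i %/ 3 == j %/ 3)%N then T (inord (i %% 3)) (inord (j %% 3)) else 0.

Definition RTT_rel (ea eb ec : F) (B : algType F) (g : 'I_9 -> B) : Prop :=
  let R := map_mx (fun c : F => c%:A) (Rmat ea eb ec) : 'M[B]_9 in
  let T := Tmat g in
  R *m T1 T *m T2 T = T2 T *m T1 T *m R.

Definition gensT (B : algType F) (k l m n p q r s t : B) : 'I_9 -> B :=
  fun i => nth 0 [:: k; p; l; q; r; s; m; t; n] i.

(* new generators, ordered X1 = (k~,l~,p~,q~,r), X2 = (m~,n~,s~,t~) *)
Definition gensTilde (B : algType F) (k l m n p q r s t : B) : 'I_9 -> B :=
  fun i => nth 0 [:: 2^-1 *: (k + n); 2^-1 *: (l + m); 2^-1 *: (p + t);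
                     2^-1 *: (q + s); r;
                     2^-1 *: (l - m); 2^-1 *: (k - n); 2^-1 *: (q - s);
                     2^-1 *: (p - t)] i.

Definition X1 (B : algType F) (g : 'I_9 -> B) : 'I_5 -> B :=
  fun i => g (lshift 4 i).
Definition X2 (B : algType F) (g : 'I_9 -> B) : 'I_4 -> B :=
  fun j => g (rshift 5 j).

Definition rel40 (B : algType F) (g : 'I_9 -> B) : Prop :=
  forall (i : 'I_5) (j : 'I_4), X1 g i * X2 g j = 0 /\ X2 g j * X1 g i = 0.

End Defs.

From HB Require Import structures.
From mathcomp Require Import all_boot all_order all_algebra.
Import GRing.Theory Num.Theory.
Local Open Scope ring_scope.

(* General part: if (A, g) is presented by orth_rel (the blocks g1, g2 of g
   satisfy g1 g2 = g2 g1 = 0), the universal property gives projections of A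
   onto free algebras on each block, left inverse to the block embeddings
   (which are thus injective).  The augmentation ideals of the two blocks
   annihilate each other, so a |-> f1 (phi1 a) + f2 (phi2 a) - (constant term)
   is a homomorphism fixing the generators; hence a |-> (phi1 a, phi2 a) is a
   bijection onto the fibre product over the constant terms.

   Specific part: computing entries, R T1 T2 = T2 T1 R for A_{+++} says that
   h (rev u) h (rev v) = h u h v for the generators h = (k, p, l, q, r, s, m,
   t, n); this is equivalent to the symmetric and antisymmetric parts of h
   annihilating each other, and these parts are (up to sign) the generators
   X1 and X2.  A change-of-generators lemma then presents A_{+++} by the 40
   relations, and the general part yields the theorem. *)

Section ScalarField.
Variable F : numClosedFieldType.
Implicit Types A B C : algType F.

Section Homomorphisms.
Variables (A C : algType F) (f : A -> C).
Hypothesis hom_f : alg_hom f.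

Lemma homD x y : f (x + y) = f x + f y. Proof. by case: hom_f. Qed.
Lemma homM x y : f (x * y) = f x * f y. Proof. by case: hom_f. Qed.
Lemma homZ c x : f (c *: x) = c *: f x. Proof. by case: hom_f. Qed.
Lemma homA c : f c%:A = c%:A. Proof. by case: hom_f => _ _ h1 hZ; rewrite hZ h1. Qed.
Lemma hom1 : f 1 = 1. Proof. by case: hom_f. Qed.
Lemma hom0 : f 0 = 0. Proof. by rewrite -(scale0r (0 : A)) homZ scale0r. Qed.
Lemma homB x y : f (x - y) = f x - f y.
Proof. by rewrite homD -scaleN1r homZ scaleN1r. Qed.

End Homomorphisms.
Arguments homD {A C f}.
Arguments homM {A C f}.
Arguments homZ {A C f}.
Arguments homA {A C f}.
Arguments hom0 {A C f}.
Arguments hom1 {A C f}.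
Arguments homB {A C f}.

Lemma hom_id A : alg_hom (fun x : A => x). Proof. by []. Qed.

Lemma hom_comp {A B C} {f : A -> B} {h : B -> C} :
  alg_hom f -> alg_hom h -> alg_hom (fun x => h (f x)).
Proof.
case=> fD fM f1 fZ [hD hM h1 hZ].
by split=> [x y|x y||c x]; rewrite ?(fD, fM, f1, fZ, hD, hM, h1, hZ).
Qed.

Lemma hom_scalar {A} C {e : A -> F^o} :
  alg_hom e -> alg_hom (fun x => (e x)%:A : C).
Proof.
case=> eD eM e1 eZ; split=> [x y|x y||c x].
- by rewrite eD scalerDl.
- by rewrite eM mulr_algl scalerA.
- by rewrite e1 scale1r.
- by rewrite eZ scalerA.
Qed.

Lemma hom_eq_gen {A C n} {g : 'I_n -> A} {f h : A -> C} :
  alg_hom f -> alg_hom h -> (forall i, f (g i) = h (g i)) ->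
  forall x, generated g x -> f x = h x.
Proof.
move=> hf hh e x; elim=> [i|c|y z _ IHy _ IHz|y z _ IHy _ IHz] //.
- by rewrite (homA hf) (homA hh).
- by rewrite (homD hf) (homD hh) IHy IHz.
- by rewrite (homM hf) (homM hh) IHy IHz.
Qed.

Lemma gen_opp {A n} {g : 'I_n -> A} {x} : generated g x -> generated g (- x).
Proof.
by move=> gx; rewrite -scaleN1r -mulr_algl; apply: gen_mul => //; apply: gen_scal.
Qed.

Lemma gen_trans {A n n'} {g : 'I_n -> A} {g' : 'I_n' -> A} :
  (forall i, generated g' (g i)) -> forall x, generated g x -> generated g' x.
Proof.
move=> gg' x; elim=> [i|c|y z _ IHy _ IHz|y z _ IHy _ IHz] //.
- exact: gen_scal.
- exact: gen_add.
- exact: gen_mul.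
Qed.

Lemma left_inverse_injective {A C n} {x : 'I_n -> A} {f : A -> C} {phi : C -> A} :
  alg_hom f -> alg_hom phi -> (forall z, generated x z) ->
  (forall i, phi (f (x i)) = x i) -> injective f.
Proof.
move=> hf hphi genx phifx.
have phiK : cancel f phi.
  by move=> z; apply: (hom_eq_gen (hom_comp hf hphi) (hom_id A) phifx z (genx z)).
exact: can_inj phiK.
Qed.

Lemma presents_change_of_generators n
    (rel rel' : forall B : algType F, ('I_n -> B) -> Prop)
    (sigma : forall B : algType F, ('I_n -> B) -> 'I_n -> B) A (g : 'I_n -> A) :
  presents rel g -> rel' A (sigma A g) ->
  (forall i, generated (sigma A g) (g i)) ->
  (forall B C (f : B -> C) h h', alg_hom f -> (forall j, f (h j) = h' j) ->
     forall i, f (sigma B h i) = sigma C h' i) ->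
  (forall B h, rel' B h -> exists2 h0, rel B h0 & forall i, sigma B h0 i = h i) ->
  presents rel' (sigma A g).
Proof.
move=> [_ geng univg] rel'g gen_sigma natS ontoS; split=> //.
- by move=> x; apply: gen_trans (geng x).
- move=> B h /ontoS [h0 /univg [f [hf fg]] sigma_h0].
  by exists f; split=> // i; rewrite (natS _ _ _ g h0 hf fg).
Qed.

Section Augmentation.
Variables (B A : algType F) (f : B -> A) (e : B -> F^o).
Hypotheses (hom_f : alg_hom f) (hom_e : alg_hom e).

Definition aug z := f z - (e z)%:A.

Lemma augD x y : aug (x + y) = aug x + aug y.
Proof. by rewrite /aug (homD hom_f) (homD hom_e) scalerDl opprD addrACA. Qed.

Lemma character_scalar c : e c%:A = c.
Proof. by rewrite (homA hom_e); apply: mulr1. Qed.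

Lemma aug_scalar c : aug c%:A = 0.
Proof. by rewrite /aug (homA hom_f) character_scalar subrr. Qed.

Lemma augM x y : aug (x * y) = aug x * aug y + e y *: aug x + e x *: aug y.
Proof.
have expand (u v : A) (a b : F) :
    (u + a%:A) * (v + b%:A) - (a * b)%:A = u * v + b *: u + a *: v.
  by rewrite mulrDl !mulrDr mulr_algr !mulr_algl scalerA !addrA addrK.
by rewrite -expand /aug !subrK (homM hom_f) (homM hom_e).
Qed.

Variables (n : nat) (x : 'I_n -> B).
Hypothesis e_x : forall i, e (x i) = 0.

Lemma aug_gen i : aug (x i) = f (x i).
Proof. by rewrite /aug e_x scale0r subr0. Qed.

Lemma aug_left_annihilator (y : A) :
  (forall i, y * f (x i) = 0) -> forall z, generated x z -> y * aug z = 0.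
Proof.
move=> yx z; elim=> [i|c|a b _ IHa _ IHb|a b _ IHa _ IHb].
- by rewrite aug_gen yx.
- by rewrite aug_scalar mulr0.
- by rewrite augD mulrDr IHa IHb addr0.
- by rewrite augM 2!mulrDr mulrA IHa mul0r -!scalerAr IHa IHb !scaler0 !addr0.
Qed.

Lemma aug_right_annihilator (y : A) :
  (forall i, f (x i) * y = 0) -> forall z, generated x z -> aug z * y = 0.
Proof.
move=> xy z; elim=> [i|c|a b _ IHa _ IHb|a b _ IHa _ IHb].
- by rewrite aug_gen xy.
- by rewrite aug_scalar mul0r.
- by rewrite augD mulrDl IHa IHb addr0.
- by rewrite augM 2!mulrDl -mulrA IHb mulr0 -!scalerAl IHa IHb !scaler0 !addr0.
Qed.

End Augmentation.
Arguments aug {B A}.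
Arguments augM {B A f e} hom_f hom_e x y.
Arguments aug_left_annihilator {B A f e} hom_f hom_e {n x} e_x y.
Arguments aug_right_annihilator {B A f e} hom_f hom_e {n x} e_x y.

Definition orth_rel n1 n2 (B : algType F) (g : 'I_(n1 + n2) -> B) : Prop :=
  forall (i : 'I_n1) (j : 'I_n2),
    g (lshift n2 i) * g (rshift n1 j) = 0 /\ g (rshift n1 j) * g (lshift n2 i) = 0.

Section OrthogonalPresentation.
Variables (n1 n2 : nat) (A : algType F) (g : 'I_(n1 + n2) -> A).
Hypothesis presA : presents (orth_rel n1 n2) g.
Local Notation g1 i := (g (lshift n2 i)).
Local Notation g2 j := (g (rshift n1 j)).

Lemma orth_lift B (u : 'I_n1 -> B) (v : 'I_n2 -> B) :
  (forall i j, u i * v j = 0 /\ v j * u i = 0) ->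
  exists phi : A -> B,
    [/\ alg_hom phi, forall i, phi (g1 i) = u i & forall j, phi (g2 j) = v j].
Proof.
move=> uv; pose w i := match split i with inl a => u a | inr b => v b end.
have w1 i : w (lshift n2 i) = u i by rewrite /w (unsplitK (inl _ i)).
have w2 j : w (rshift n1 j) = v j by rewrite /w (unsplitK (inr _ j)).
have [_ _ /(_ B w) univ] := presA.
have [|phi [hphi phig]] := univ; first by move=> i j; rewrite w1 w2; apply: uv.
by exists phi; split=> // [i|j]; rewrite phig ?w1 ?w2.
Qed.

(* Each block generates a free subalgebra: a homomorphism from an algebra
   generated by x1 onto the block g1 has the projection killing g2 as a left
   inverse. *)
Lemma orth_block1_injective B1 (x1 : 'I_n1 -> B1) (f : B1 -> A) :
  (forall z, generated x1 z) -> alg_hom f -> (forall i, f (x1 i) = g1 i) ->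
  injective f.
Proof.
move=> gen1 hf fx1.
have [|phi [hphi phi1 _]] := @orth_lift B1 x1 (fun _ => 0).
  by move=> i j; rewrite mulr0 mul0r.
by apply: (left_inverse_injective hf hphi gen1) => i; rewrite fx1.
Qed.

Lemma orth_block2_injective B2 (x2 : 'I_n2 -> B2) (f : B2 -> A) :
  (forall z, generated x2 z) -> alg_hom f -> (forall j, f (x2 j) = g2 j) ->
  injective f.
Proof.
move=> gen2 hf fx2.
have [|phi [hphi _ phi2]] := @orth_lift B2 (fun _ => 0) x2.
  by move=> i j; rewrite mulr0 mul0r.
by apply: (left_inverse_injective hf hphi gen2) => j; rewrite fx2.
Qed.

Section FibreProduct.
Variables (B1 : algType F) (x1 : 'I_n1 -> B1) (B2 : algType F) (x2 : 'I_n2 -> B2).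
Variables (f1 : B1 -> A) (f2 : B2 -> A) (phi1 : A -> B1) (phi2 : A -> B2).
Variables (e1 : B1 -> F^o) (e2 : B2 -> F^o).
Hypotheses (gen1 : forall z, generated x1 z) (gen2 : forall w, generated x2 w).
Hypotheses (hom_f1 : alg_hom f1) (hom_f2 : alg_hom f2).
Hypotheses (hom_phi1 : alg_hom phi1) (hom_phi2 : alg_hom phi2).
Hypotheses (hom_e1 : alg_hom e1) (hom_e2 : alg_hom e2).
Hypotheses (f1_x1 : forall i, f1 (x1 i) = g1 i) (f2_x2 : forall j, f2 (x2 j) = g2 j).
Hypotheses (phi1_g1 : forall i, phi1 (g1 i) = x1 i) (phi1_g2 : forall j, phi1 (g2 j) = 0).
Hypotheses (phi2_g1 : forall i, phi2 (g1 i) = 0) (phi2_g2 : forall j, phi2 (g2 j) = x2 j).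
Hypotheses (e1_x1 : forall i, e1 (x1 i) = 0) (e2_x2 : forall j, e2 (x2 j) = 0).

Local Notation aug1 := (aug f1 e1).
Local Notation aug2 := (aug f2 e2).

Lemma phi1_f1 z : phi1 (f1 z) = z.
Proof.
by apply: (hom_eq_gen (hom_comp hom_f1 hom_phi1) (hom_id B1) _ z (gen1 z)) => i;
  rewrite f1_x1 phi1_g1.
Qed.

Lemma phi2_f2 w : phi2 (f2 w) = w.
Proof.
by apply: (hom_eq_gen (hom_comp hom_f2 hom_phi2) (hom_id B2) _ w (gen2 w)) => j;
  rewrite f2_x2 phi2_g2.
Qed.

Lemma phi1_f2 w : phi1 (f2 w) = (e2 w)%:A.
Proof.
apply: (hom_eq_gen (hom_comp hom_f2 hom_phi1) (hom_scalar B1 hom_e2) _ w (gen2 w)).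
by move=> j; rewrite f2_x2 phi1_g2 e2_x2 scale0r.
Qed.

Lemma phi2_f1 z : phi2 (f1 z) = (e1 z)%:A.
Proof.
apply: (hom_eq_gen (hom_comp hom_f1 hom_phi2) (hom_scalar B2 hom_e1) _ z (gen1 z)).
by move=> i; rewrite f1_x1 phi2_g1 e1_x1 scale0r.
Qed.

Lemma constant_terms_agree a : e1 (phi1 a) = e2 (phi2 a).
Proof.
have [_ genA _] := presA.
apply: (hom_eq_gen (hom_comp hom_phi1 hom_e1) (hom_comp hom_phi2 hom_e2) _ a (genA a)).
by move=> i; case: (split_ordP i) => [i1 ->|i2 ->];
  rewrite ?(phi1_g1, phi2_g1, phi1_g2, phi2_g2, e1_x1, e2_x2, hom0 hom_e1, hom0 hom_e2).
Qed.

Lemma aug_orthogonal z w : aug1 z * aug2 w = 0 /\ aug2 w * aug1 z = 0.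
Proof.
have [orthA _ _] := presA.
have g1_aug2 i : g1 i * aug2 w = 0 /\ aug2 w * g1 i = 0.
  split; [apply: (aug_left_annihilator hom_f2 hom_e2 e2_x2) (gen2 w)
         |apply: (aug_right_annihilator hom_f2 hom_e2 e2_x2) (gen2 w)];
  by move=> j; rewrite f2_x2; case: (orthA i j).
split; [apply: (aug_right_annihilator hom_f1 hom_e1 e1_x1) (gen1 z)
       |apply: (aug_left_annihilator hom_f1 hom_e1 e1_x1) (gen1 z)];
by move=> i; rewrite f1_x1; case: (g1_aug2 i).
Qed.

(* The inverse of a |-> (phi1 a, phi2 a) on the fibre product. *)
Definition glue b1 b2 := f1 b1 + f2 b2 - (e1 b1)%:A.

Lemma glue_aug b1 b2 :
  e1 b1 = e2 b2 -> glue b1 b2 = aug1 b1 + aug2 b2 + (e1 b1)%:A.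
Proof. by move=> e; rewrite /glue /aug -e -[RHS]addrA subrK addrAC. Qed.

Lemma glue_proj b1 b2 :
  e1 b1 = e2 b2 -> phi1 (glue b1 b2) = b1 /\ phi2 (glue b1 b2) = b2.
Proof.
move=> e; rewrite /glue (homB hom_phi1) (homB hom_phi2) (homD hom_phi1) (homD hom_phi2).
rewrite phi1_f1 phi1_f2 phi2_f1 phi2_f2 (homA hom_phi1) (homA hom_phi2) -e.
by rewrite addrK [_ + b2]addrC addrK.
Qed.

Lemma glue_hom : alg_hom (fun a => glue (phi1 a) (phi2 a)).
Proof.
have [phi1D phi1M phi1_1 phi1Z] := hom_phi1.
have [phi2D phi2M phi2_1 phi2Z] := hom_phi2.
split=> [a b|a b||c a]; rewrite /glue.
- rewrite phi1D phi2D (homD hom_f1) (homD hom_f2) (homD hom_e1) scalerDl.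
  by rewrite [f1 (phi1 a) + _ + _]addrACA opprD [in RHS]addrACA.
- have expand (u1 u2 v1 v2 : A) (c d : F) : u1 * v2 = 0 -> u2 * v1 = 0 ->
      (u1 + u2 + c%:A) * (v1 + v2 + d%:A) =
      (u1 * v1 + d *: u1 + c *: v1) + (u2 * v2 + d *: u2 + c *: v2) + (c * d)%:A.
    move=> h12 h21; rewrite !mulrDl !mulrDr h12 h21 !mulr_algr !mulr_algl scalerA.
    by rewrite !addr0 add0r [d * c]mulrC [in RHS]addrACA !addrA.
  have glueE c := glue_aug _ _ (constant_terms_agree c).
  rewrite -!/(glue _ _) !glueE expand; last 2 first.
  + exact: proj1 (aug_orthogonal _ _).
  + exact: proj2 (aug_orthogonal _ _).
  rewrite phi1M phi2M (augM hom_f1 hom_e1) (augM hom_f2 hom_e2) (homM hom_e1).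
  by rewrite -!constant_terms_agree.
- by rewrite phi1_1 phi2_1 (hom1 hom_f1) (hom1 hom_f2) (hom1 hom_e1) scale1r addrK.
- rewrite phi1Z phi2Z (homZ hom_f1) (homZ hom_f2) (homZ hom_e1).
  by rewrite -scalerA scalerBr scalerDr.
Qed.

Lemma glue_projK a : glue (phi1 a) (phi2 a) = a.
Proof.
have [_ genA _] := presA.
apply: (hom_eq_gen glue_hom (hom_id A) _ a (genA a)) => i.
case: (split_ordP i) => [i1 ->|i2 ->]; rewrite /glue.
- by rewrite phi1_g1 phi2_g1 f1_x1 e1_x1 (hom0 hom_f2) scale0r addr0 subr0.
- by rewrite phi1_g2 phi2_g2 f2_x2 (hom0 hom_f1) (hom0 hom_e1) scale0r add0r subr0.
Qed.

Lemma fibre_product_bijection :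
  injective (fun a => (phi1 a, phi2 a)) /\
  forall b1 b2, e1 b1 = e2 b2 <-> exists a, phi1 a = b1 /\ phi2 a = b2.
Proof.
split=> [a a' [phi1_eq phi2_eq]|b1 b2].
  by rewrite -[a]glue_projK -[a']glue_projK phi1_eq phi2_eq.
split=> [e|[a [<- <-]]]; last exact: constant_terms_agree.
by exists (glue b1 b2); apply: glue_proj.
Qed.

End FibreProduct.
Arguments fibre_product_bijection {B1 x1 B2 x2 f1 f2 phi1 phi2 e1 e2}.

Lemma orth_fibre_product B1 (x1 : 'I_n1 -> B1) B2 (x2 : 'I_n2 -> B2) :
  free_on x1 -> free_on x2 ->
  forall (e1 : B1 -> F^o) (e2 : B2 -> F^o),
  alg_hom e1 -> (forall i, e1 (x1 i) = 0) ->
  alg_hom e2 -> (forall j, e2 (x2 j) = 0) ->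
  exists (phi1 : A -> B1) (phi2 : A -> B2),
    [/\ alg_hom phi1, alg_hom phi2,
        injective (fun a => (phi1 a, phi2 a)) &
        forall b1 b2, e1 b1 = e2 b2 <-> exists a, phi1 a = b1 /\ phi2 a = b2].
Proof.
move=> [_ gen1 free1] [_ gen2 free2] e1 e2 hom_e1 e1_x1 hom_e2 e2_x2.
have [f1 [hom_f1 f1_x1]] := free1 A (fun i => g1 i) I.
have [f2 [hom_f2 f2_x2]] := free2 A (fun j => g2 j) I.
have [|phi1 [hom_phi1 phi1_g1 phi1_g2]] := @orth_lift B1 x1 (fun _ => 0).
  by move=> i j; rewrite mulr0 mul0r.
have [|phi2 [hom_phi2 phi2_g1 phi2_g2]] := @orth_lift B2 (fun _ => 0) x2.
  by move=> i j; rewrite mulr0 mul0r.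
exists phi1, phi2.
have [inj fibre] := fibre_product_bijection gen1 gen2 hom_f1 hom_f2 hom_phi1 hom_phi2
  hom_e1 hom_e2 f1_x1 f2_x2 phi1_g1 phi1_g2 phi2_g1 phi2_g2 e1_x1 e2_x2.
by split.
Qed.

End OrthogonalPresentation.

Definition hi (i : 'I_9) : 'I_3 := inord (i %/ 3).
Definition lo (i : 'I_9) : 'I_3 := inord (i %% 3).
Definition pair9 (a b : 'I_3) : 'I_9 := inord (3 * a + b).

Lemma hi_pair a b : hi (pair9 a b) = a.
Proof.
by case: a b => [[|[|[|//]]] ?] [[|[|[|//]]] ?]; apply: ord_inj;
  rewrite /hi /pair9 !inordK.
Qed.

Lemma lo_pair a b : lo (pair9 a b) = b.
Proof.
by case: a b => [[|[|[|//]]] ?] [[|[|[|//]]] ?]; apply: ord_inj;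
  rewrite /lo /pair9 !inordK.
Qed.

Lemma pairK i : pair9 (hi i) (lo i) = i.
Proof.
by case: i => [[|[|[|[|[|[|[|[|[|//]]]]]]]]] ?]; apply: ord_inj;
  rewrite /hi /lo /pair9 !inordK.
Qed.

Lemma rev_pair a b : rev_ord (pair9 a b) = pair9 (rev_ord a) (rev_ord b).
Proof.
by case: a b => [[|[|[|//]]] ?] [[|[|[|//]]] ?]; apply: ord_inj;
  rewrite /pair9 /= !inordK.
Qed.

Lemma hi_rev i : hi (rev_ord i) = rev_ord (hi i).
Proof. by rewrite -{1}[i]pairK rev_pair hi_pair. Qed.

Lemma lo_rev i : lo (rev_ord i) = rev_ord (lo i).
Proof. by rewrite -{1}[i]pairK rev_pair lo_pair. Qed.

Definition swap (i : 'I_9) : 'I_9 := pair9 (lo i) (hi i).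

Lemma swapK : involutive swap.
Proof. by move=> i; rewrite /swap hi_pair lo_pair pairK. Qed.

Lemma swap_rev i : swap (rev_ord i) = rev_ord (swap i).
Proof. by rewrite /swap rev_pair hi_rev lo_rev. Qed.

Lemma mod3_eq (i j : 'I_9) : (i %% 3 == j %% 3)%N = (lo i == lo j).
Proof. by rewrite -val_eqE /= !inordK ?ltn_mod. Qed.

Lemma div3_eq (i j : 'I_9) : (i %/ 3 == j %/ 3)%N = (hi i == hi j).
Proof. by rewrite -val_eqE /= !inordK ?ltn_divLR. Qed.

(* Entries of T_1 = T (x) 1 and T_2 = 1 (x) T, and of their products. *)
Section TensorEntries.
Variables (B : algType F) (T : 'M[B]_3).

Lemma T1E i j : T1 T i j = if lo i == lo j then T (hi i) (hi j) else 0.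
Proof. by rewrite mxE mod3_eq. Qed.

Lemma T2E i j : T2 T i j = if hi i == hi j then T (lo i) (lo j) else 0.
Proof. by rewrite mxE div3_eq. Qed.

Lemma T1T2E i j : (T1 T *m T2 T) i j = T (hi i) (hi j) * T (lo i) (lo j).
Proof.
rewrite mxE (bigD1 (pair9 (hi j) (lo i))) //= big1 ?addr0.
  by rewrite T1E T2E hi_pair lo_pair !eqxx.
move=> b hb; rewrite T1E T2E; case: eqP => [lo_ib|]; last by rewrite mul0r.
case: eqP => [hi_bj|]; last by rewrite mulr0.
by move: hb; rewrite -(pairK b) hi_bj -lo_ib eqxx.
Qed.

Lemma T2T1E i j : (T2 T *m T1 T) i j = T (lo i) (lo j) * T (hi i) (hi j).
Proof.
rewrite mxE (bigD1 (pair9 (hi i) (lo j))) //= big1 ?addr0.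
  by rewrite T1E T2E hi_pair lo_pair !eqxx.
move=> b hb; rewrite T1E T2E; case: eqP => [hi_ib|]; last by rewrite mul0r.
case: eqP => [lo_bj|]; last by rewrite mulr0.
by move: hb; rewrite -(pairK b) -hi_ib lo_bj eqxx.
Qed.

End TensorEntries.

Lemma rev_ord9_eq (u a : 'I_9) : (a == rev_ord u) = (u + a == 8)%N.
Proof.
have u_le8 : (u <= 8)%N by rewrite -ltnS.
rewrite -val_eqE /= subSS; apply/eqP/eqP => [->|e]; first by rewrite subnKC.
by apply/eqP; rewrite -(eqn_add2l u) subnKC // e.
Qed.

Lemma RhatE (u a : 'I_9) :
  Rhat (1 : F) 1 1 u a = 2^-1 * ((a == u)%:R + (a == rev_ord u)%:R).
Proof.
rewrite mxE !if_same rev_ord9_eq div1r.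
have [->|a_neq_u] := eqVneq a u.
  have -> : (u + u == 8)%N = (u == 4%N :> nat).
    by case: u => [[|[|[|[|[|[|[|[|[|//]]]]]]]]] ?].
  by case: (u == 4%N :> nat); rewrite ?addr0 ?mulr1 // mulVf // pnatr_eq0.
by rewrite add0r; case: (u + a == 8)%N; rewrite ?mulr1 ?mulr0.
Qed.

Lemma swap_val (i : 'I_9) : swap i = (3 * (i %% 3) + i %/ 3)%N :> nat.
Proof.
by case: i => [[|[|[|[|[|[|[|[|[|//]]]]]]]]] ?]; rewrite /swap /pair9 /hi /lo !inordK.
Qed.

Lemma PflipE (M : 'M[F]_9) i a : (Pflip F *m M) i a = M (swap i) a.
Proof.
rewrite mxE (bigD1 (swap i)) //= big1 ?addr0; first by rewrite mxE swap_val eqxx mul1r.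
by move=> c c_neq; rewrite mxE -swap_val val_eqE (negbTE c_neq) mul0r.
Qed.

Lemma RmatE a b :
  Rmat (1 : F) 1 1 a b = 2^-1 * ((b == swap a)%:R + (b == rev_ord (swap a))%:R).
Proof. by rewrite /Rmat PflipE RhatE. Qed.

Section RMatrixProducts.
Variable B : algType F.

Definition RB : 'M[B]_9 := map_mx (fun c : F => c%:A) (Rmat 1 1 1).

Lemma sum_average (f : 'I_9 -> B) x y :
  \sum_a (2^-1 * ((a == x)%:R + (a == y)%:R)) *: f a = 2^-1 *: (f x + f y).
Proof.
have delta z : \sum_a (a == z)%:R *: f a = f z.
  rewrite (bigD1 z) //= eqxx scale1r big1 ?addr0 // => a /negbTE->.
  by rewrite scale0r.
under eq_bigr => a _ do rewrite -scalerA scalerDl.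
by rewrite -scaler_sumr big_split /= !delta.
Qed.

Lemma RB_mulE (M : 'M[B]_9) i j :
  (RB *m M) i j = 2^-1 *: (M (swap i) j + M (rev_ord (swap i)) j).
Proof.
rewrite mxE -(sum_average (fun a => M a j)); apply: eq_bigr => a _.
by rewrite mxE RmatE mulr_algl.
Qed.

Lemma mul_RBE (M : 'M[B]_9) i j :
  (M *m RB) i j = 2^-1 *: (M i (swap j) + M i (swap (rev_ord j))).
Proof.
rewrite mxE -(sum_average (fun a => M i a)); apply: eq_bigr => a _.
have swap_eq (x y : 'I_9) : (x == swap y) = (y == swap x).
  by apply/eqP/eqP=> ->; rewrite swapK.
have rev_swap_eq (x y : 'I_9) : (x == rev_ord (swap y)) = (y == swap (rev_ord x)).
  by apply/eqP/eqP=> ->; rewrite ?rev_ordK swapK ?rev_ordK.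
by rewrite mxE RmatE mulr_algr swap_eq rev_swap_eq.
Qed.

Lemma TmatE (h : 'I_9 -> B) a c : Tmat h a c = h (pair9 a c).
Proof. by rewrite mxE. Qed.

Lemma RTT_entry (h : 'I_9 -> B) i j :
  let u := pair9 (lo i) (rev_ord (hi j)) in
  let v := pair9 (hi i) (rev_ord (lo j)) in
  (RB *m (T1 (Tmat h) *m T2 (Tmat h))) i j = (T2 (Tmat h) *m T1 (Tmat h) *m RB) i j
  <-> h (rev_ord u) * h (rev_ord v) = h u * h v.
Proof.
rewrite RB_mulE mul_RBE !T1T2E !T2T1E !TmatE -!swap_rev /swap.
rewrite !(hi_pair, lo_pair, hi_rev, lo_rev, rev_pair, rev_ordK).
split=> [|->] //.
by move/(scalerI (invr_neq0 _))/addrI; apply; rewrite pnatr_eq0.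
Qed.

End RMatrixProducts.

Lemma RTT_flip_invariant {B : algType F} (h : 'I_9 -> B) :
  RTT_rel 1 1 1 h <-> forall u v, h (rev_ord u) * h (rev_ord v) = h u * h v.
Proof.
rewrite /RTT_rel -mulmxA -/(RB B); split=> [RTT u v|inv].
  pose i := pair9 (hi v) (hi u); pose j := pair9 (rev_ord (lo u)) (rev_ord (lo v)).
  have := proj1 (@RTT_entry B h i j) (congr1 (fun M : 'M[B]_9 => M i j) RTT).
  by rewrite !(hi_pair, lo_pair, rev_ordK, pairK).
by apply/matrixP=> i j; apply/(@RTT_entry B h).
Qed.

(* Halving is available since F has characteristic 0. *)
Lemma half_double (B : algType F) (x : B) : 2^-1 *: (x + x) = x.
Proof. by rewrite -mulr2n -scaler_nat scalerA mulVf ?pnatr_eq0 // scale1r. Qed.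

Lemma half_sum (B : algType F) (x y : B) : 2^-1 *: ((x + y) + (x - y)) = x.
Proof. by rewrite addrACA subrr addr0 half_double. Qed.

Lemma half_diff (B : algType F) (x y : B) : 2^-1 *: ((x + y) - (x - y)) = y.
Proof. by rewrite opprB addrC addrA subrK half_double. Qed.

Section SymmetricParts.
Variables (B : algType F) (I : Type) (rho : I -> I) (h : I -> B).
Hypothesis rhoK : involutive rho.

Definition sym u := 2^-1 *: (h u + h (rho u)).
Definition asym u := 2^-1 *: (h u - h (rho u)).

Lemma sym_add_asym u : h u = sym u + asym u.
Proof. by rewrite -scalerDr half_sum. Qed.

Lemma sym_sub_asym u : h (rho u) = sym u - asym u.
Proof. by rewrite -scalerBr half_diff. Qed.

Lemma flip_invariant_iff :
  (forall u v, h (rho u) * h (rho v) = h u * h v) <->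
  (forall u v, sym u * asym v = 0 /\ asym u * sym v = 0).
Proof.
split=> [inv u v|orth u v].
  have cross : h u * h (rho v) = h (rho u) * h v.
    by rewrite -[in RHS](rhoK v) inv.
  rewrite /sym /asym -!scalerAl -!scalerAr mulrDl mulrBl !mulrBr !mulrDr inv cross.
  by rewrite addrA subrK subrr [X in _ - X]addrC subrr !scaler0.
rewrite !sym_sub_asym (sym_add_asym u) (sym_add_asym v).
have [su_av au_sv] := orth u v.
by rewrite !mulrDl !mulrDr mulrN mulNr mulrNN su_av au_sv oppr0 !addr0 !add0r.
Qed.

End SymmetricParts.
Arguments sym {B I} rho h u.
Arguments asym {B I} rho h u.
Arguments flip_invariant_iff {B I rho h}.
Arguments sym_add_asym {B I} rho h u.

(* The change of generators k~ = (k + n)/2, ..., t~ = (p - t)/2: tilde h is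
   the family of new generators built from h = (k, p, l, q, r, s, m, t, n),
   so that tilde (gensT k l m n p q r s t) is gensTilde k l m n p q r s t. *)
Section TildeGenerators.
Variable B : algType F.
Local Notation o k := (@Ordinal 9 k isT).

Definition tilde (h : 'I_9 -> B) : 'I_9 -> B :=
  gensTilde (h (o 0)) (h (o 2)) (h (o 6)) (h (o 8)) (h (o 1)) (h (o 3)) (h (o 4))
            (h (o 5)) (h (o 7)).

Section Letters.
Variables k l m n p q r s t : B.
Local Notation h := (gensT k l m n p q r s t).
Local Notation g := (gensTilde k l m n p q r s t).

Lemma sym_in_X1 u : exists i, sym (@rev_ord 9) h u = X1 g i.
Proof.
rewrite /sym; case: u => [[|[|[|[|[|[|[|[|[|//]]]]]]]]] ?].
- by exists (@Ordinal 5 0 isT).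
- by exists (@Ordinal 5 2 isT).
- by exists (@Ordinal 5 1 isT).
- by exists (@Ordinal 5 3 isT).
- by exists (@Ordinal 5 4 isT); rewrite /X1 /= half_double.
- by exists (@Ordinal 5 3 isT); rewrite addrC.
- by exists (@Ordinal 5 1 isT); rewrite addrC.
- by exists (@Ordinal 5 2 isT); rewrite addrC.
- by exists (@Ordinal 5 0 isT); rewrite addrC.
Qed.

Lemma X1_in_sym i : exists u, X1 g i = sym (@rev_ord 9) h u.
Proof.
rewrite /sym; case: i => [[|[|[|[|[|//]]]]] ?].
- by exists (o 0).
- by exists (o 2).
- by exists (o 1).
- by exists (o 3).
- by exists (o 4); rewrite /X1 /= half_double.
Qed.

Lemma asym_in_X2 u :
  asym (@rev_ord 9) h u = 0 \/
  exists j, asym (@rev_ord 9) h u = X2 g j \/ asym (@rev_ord 9) h u = - X2 g j.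
Proof.
rewrite /asym; case: u => [[|[|[|[|[|[|[|[|[|//]]]]]]]]] ?].
- by right; exists (@Ordinal 4 1 isT); left.
- by right; exists (@Ordinal 4 3 isT); left.
- by right; exists (@Ordinal 4 0 isT); left.
- by right; exists (@Ordinal 4 2 isT); left.
- by left; rewrite /= subrr scaler0.
- by right; exists (@Ordinal 4 2 isT); right; rewrite -scalerN opprB.
- by right; exists (@Ordinal 4 0 isT); right; rewrite -scalerN opprB.
- by right; exists (@Ordinal 4 3 isT); right; rewrite -scalerN opprB.
- by right; exists (@Ordinal 4 1 isT); right; rewrite -scalerN opprB.
Qed.

Lemma X2_in_asym j : exists u, X2 g j = asym (@rev_ord 9) h u.
Proof.
rewrite /asym; case: j => [[|[|[|[|//]]]] ?].
- by exists (o 2).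
- by exists (o 0).
- by exists (o 3).
- by exists (o 1).
Qed.

Lemma rel40_iff_orthogonal_parts :
  rel40 g <->
  forall u v, sym (@rev_ord 9) h u * asym (@rev_ord 9) h v = 0 /\
              asym (@rev_ord 9) h u * sym (@rev_ord 9) h v = 0.
Proof.
split=> [rel u v|orth i j].
  have [i ->] := sym_in_X1 u; have [i' ->] := sym_in_X1 v.
  split.
    case: (asym_in_X2 v) => [->|[j [->|->]]]; first by rewrite mulr0.
      by case: (rel i j).
    by rewrite mulrN; case: (rel i j) => ->; rewrite oppr0.
  case: (asym_in_X2 u) => [->|[j [->|->]]]; first by rewrite mul0r.
    by case: (rel i' j).
  by rewrite mulNr; case: (rel i' j) => _ ->; rewrite oppr0.
have [u ->] := X1_in_sym i; have [v ->] := X2_in_asym j.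
by case: (orth u v) => -> _; case: (orth v u) => _ ->.
Qed.

Lemma RTT_iff_rel40 : RTT_rel 1 1 1 h <-> rel40 g.
Proof.
apply: (iff_trans (RTT_flip_invariant h)).
apply: (iff_trans (flip_invariant_iff rev_ordK)).
exact: iff_sym rel40_iff_orthogonal_parts.
Qed.

Lemma gensT_generated i : generated g (h i).
Proof.
rewrite (sym_add_asym (@rev_ord 9) h i).
apply: gen_add.
  by have [j ->] := sym_in_X1 i; apply: gen_gen.
case: (asym_in_X2 i) => [->|[j [->|->]]].
- by rewrite -(scale0r 1); apply: gen_scal.
- exact: gen_gen.
- by apply: gen_opp; apply: gen_gen.
Qed.

End Letters.

Lemma tilde_onto (h : 'I_9 -> B) :
  rel40 h -> exists2 h0, RTT_rel 1 1 1 h0 & forall i, tilde h0 i = h i.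
Proof.
move=> rel_h.
pose h0 := gensT (h (o 0) + h (o 6)) (h (o 1) + h (o 5)) (h (o 1) - h (o 5))
  (h (o 0) - h (o 6)) (h (o 2) + h (o 8)) (h (o 3) + h (o 7)) (h (o 4))
  (h (o 3) - h (o 7)) (h (o 2) - h (o 8)).
have tilde_h0 i : tilde h0 i = h i.
  case: i => [[|[|[|[|[|[|[|[|[|//]]]]]]]]] lt_i9]; rewrite (bool_irrelevance lt_i9 isT);
  by rewrite /tilde /gensTilde /= ?half_sum ?half_diff.
exists h0 => //; apply/RTT_iff_rel40; change (rel40 (tilde h0)) => i j.
by rewrite /X1 /X2 !tilde_h0; apply: rel_h.
Qed.
End TildeGenerators.
Arguments tilde {B}.

Lemma tilde_natural B C (f : B -> C) (h : 'I_9 -> B) (h' : 'I_9 -> C) :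
  alg_hom f -> (forall j, f (h j) = h' j) -> forall i, f (tilde h i) = tilde h' i.
Proof.
move=> hf fh; case=> [[|[|[|[|[|[|[|[|[|//]]]]]]]]] ?];
  by rewrite /tilde /gensTilde /= ?(homZ hf) ?(homB hf) ?(homD hf) !fh.
Qed.

End ScalarField.

Theorem mainTheorem5 (F : numClosedFieldType) (A : algType F)
    (k l m n p q r s t : A) :
  (* A, with generators k,...,t, is the algebra A_{+++} *)
  presents (@RTT_rel F 1 1 1) (gensT k l m n p q r s t) ->
  let g := gensTilde k l m n p q r s t in
  (* A_{+++} is generated by the new generators subject exactly to the 40 relations *)
  presents (@rel40 F) g
  (* no relations among X1: the free algebra on X1 embeds *)
  /\ (forall (B1 : algType F) (x1 : 'I_5 -> B1), free_on x1 ->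
        forall f : B1 -> A, alg_hom f -> (forall i, f (x1 i) = X1 g i) ->
        injective f)
  (* no relations among X2 *)
  /\ (forall (B2 : algType F) (x2 : 'I_4 -> B2), free_on x2 ->
        forall f : B2 -> A, alg_hom f -> (forall j, f (x2 j) = X2 g j) ->
        injective f)
  (* A_{+++} is isomorphic to the fibre product of the free algebras over
     the constant-term maps e1, e2 *)
  /\ (forall (B1 : algType F) (x1 : 'I_5 -> B1) (B2 : algType F)
             (x2 : 'I_4 -> B2),
        free_on x1 -> free_on x2 ->
        forall (e1 : B1 -> F^o) (e2 : B2 -> F^o),
        alg_hom e1 -> (forall i, e1 (x1 i) = 0) ->
        alg_hom e2 -> (forall j, e2 (x2 j) = 0) ->
        exists (phi1 : A -> B1) (phi2 : A -> B2),
          [/\ alg_hom phi1, alg_hom phi2,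
              injective (fun a => (phi1 a, phi2 a)) &
              forall (b1 : B1) (b2 : B2),
                e1 b1 = e2 b2 <-> exists a, phi1 a = b1 /\ phi2 a = b2]).
Proof.
move=> presT g.
have presA : presents (@rel40 F) g.
  apply: (@presents_change_of_generators F 9 _ _ (@tilde F) _ _ presT).
  - by case: presT => /RTT_iff_rel40.
  - exact: gensT_generated.
  - exact: tilde_natural.
  - exact: tilde_onto.
have orthA : presents (@orth_rel F 5 4) g := presA.
split=> //; split; [|split].
- move=> B1 x1 [_ gen1 _] f.
  exact: (@orth_block1_injective F 5 4 A g orthA B1 x1 f gen1).
- move=> B2 x2 [_ gen2 _] f.
  exact: (@orth_block2_injective F 5 4 A g orthA B2 x2 f gen2).
- exact: (@orth_fibre_product F 5 4 A g orthA).
Qed.
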